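(* Let $q,d\geq 2$ be integers. Suppose that for every $\mathbf{s}\in(\mathbb{Z}/d\mathbb{Z})^5$ the density $\delta(q,d;\mathbf{s})$ exists, and let $\boldsymbol{\delta}$ be the column vector $(\delta(q,d;\mathbf{s}))_{\mathbf{s}\in(\mathbb{Z}/d\mathbb{Z})^5}$. Then $P(q,d)\boldsymbol{\delta}=\boldsymbol{\delta}$ (i.e., $\boldsymbol{\delta}$ is a right eigenvector of $P(q,d)$ with eigenvalue $1$), and all entries of $\boldsymbol{\delta}$ are rational numbers.
   Context: For an integer $q\geq 2$ and $n\in\mathbb{N}$: $v_q(0)=0$ and, for $n>0$, $v_q(n)=\max\{k: q^k\mid n\}$; $w_q(n)=\sum_{i=0}^n v_q(i)$; $u_q(n)=\sum_{i=0}^n w_q(i)$. For $\mathbf{s}=(\theta_u,\theta_w,\theta_2,\theta_1,\theta_0)$ with entries in $\mathbb{Z}$ (or in $\mathbb{Z}/d\mathbb{Z}$, which is equivalent since only residues mod $d$ matter), $\gamma(A,q,d;\mathbf{s})$ is the number of $n\in\mathbb{N}$, $n<A$, with $\theta_u u_q(n)+\theta_w w_q(n)+\theta_2\frac{n(n+1)}{2}+\theta_1 n+\theta_0\equiv 0\pmod d$, and $\delta(q,d;\mathbf{s})=\lim_{N\to\infty}\gamma(N,q,d;\mathbf{s})/N$ when this limit exists. For $\lambda\in\{0,\ldots,q-1\}$ let $M_\lambda$ be the $5\times5$ matrix, reduced modulo $d$, $$M_\lambda=\begin{pmatrix} q & \lambda-q+1 & q & \lambda-q+1 & 0\\ 0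 & 1 & 0 & 1 & 0\\ 0 & 0 & q^2 & \lambda q-\frac{q(q-1)}{2} & \frac{\lambda(\lambda+1)}{2}\\ 0 & 0 & 0 & q & \lambda\\ 0 & 0 & 0 & 0 & 1 \end{pmatrix}.$$ For $\mathbf{s},\mathbf{t}\in(\mathbb{Z}/d\mathbb{Z})^5$ (row vectors), let $\mu(\mathbf{s},\mathbf{t})$ be the number of $\lambda\in\{0,\ldots,q-1\}$ with $\mathbf{t}=\mathbf{s}M_\lambda$. Then $P(q,d)$ is the $d^5\times d^5$ matrix indexed by $(\mathbb{Z}/d\mathbb{Z})^5$ with $(\mathbf{s},\mathbf{t})$-entry $\mu(\mathbf{s},\mathbf{t})/q$. *)

From HB Require Import structures.
From mathcomp Require Import all_boot all_order all_algebra.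
From mathcomp Require Import all_classical all_reals all_analysis.
Unset Printing Implicit Defensive.
Import Order.TTheory GRing.Theory Num.Theory.
Local Open Scope ring_scope.

(* v_q(0) = 0 ; v_q(n) = max{k : q^k | n} for n > 0.  For q >= 2 and n > 0,
   every such k satisfies k < n+1, so the bounded max is the true max. *)
Definition vq (q n : nat) : nat :=
  if n == 0%N then 0%N else (\max_(k < n.+1 | (q ^ k %| n)%N) (k : nat))%N.

Definition wq (q n : nat) : nat := (\sum_(i < n.+1) vq q i)%N.

Definition uq (q n : nat) : nat := (\sum_(i < n.+1) wq q i)%N.

(* s = (theta_u, theta_w, theta_2, theta_1, theta_0) as a row vector in (Z/dZ)^5,
   coordinates 0..4 in that order. *)
Definition cond (q d : nat) (s : 'rV['Z_d]_5) (n : nat) : bool :=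
  s 0 0 * (uq q n)%:R + s 0 1 * (wq q n)%:R + s 0 2 * ((n * n.+1)./2)%:R
  + s 0 3 * n%:R + s 0 4 == 0.

Definition gamma (A q d : nat) (s : 'rV['Z_d]_5) : nat :=
  #|[set n : 'I_A | cond q d s n]|.

Definition Mentry (d q lam : nat) (i j : nat) : 'Z_d :=
  match i, j with
  | 0, 0 => q%:R
  | 0, 1 => lam%:R - q%:R + 1
  | 0, 2 => q%:R
  | 0, 3 => lam%:R - q%:R + 1
  | 1, 1 => 1
  | 1, 3 => 1
  | 2, 2 => (q ^ 2)%:R
  | 2, 3 => (lam * q)%:R - ((q * (q - 1))./2)%:R
  | 2, 4 => ((lam * lam.+1)./2)%:R
  | 3, 3 => q%:R
  | 3, 4 => lam%:R
  | 4, 4 => 1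
  | _, _ => 0
  end.

Definition Mlam (d q lam : nat) : 'M['Z_d]_5 :=
  \matrix_(i < 5, j < 5) Mentry d q lam i j.

Definition mu (q d : nat) (s t : 'rV['Z_d]_5) : nat :=
  #|[set lam : 'I_q | t == s *m Mlam d q lam]|.

Definition Pqd {R : realType} (q d : nat) (s t : 'rV['Z_d]_5) : R :=
  (mu q d s t)%:R / q%:R.

(* Write n = q m + l with 0 <= l < q.  The quantities u_q(n), w_q(n), n(n+1)/2,
   n and 1 are affine in the same quantities at m, with coefficients given by
   M_l; hence the condition for s at q m + l is the condition for s M_l at m, so
   gamma(qN, s) = sum_l gamma(N, s M_l).  Dividing by qN and letting N -> oo
   gives P delta = delta.
   For rationality, a_k = gamma(q^k, .)/q^k satisfies a_(k+1) = P a_k, a_0 is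
   rational and a_k -> delta.  Since a_0 - a_k lies in the image of I - P, so
   does a_0 - delta, while delta lies in the kernel.  This linear system has
   rational coefficients, so a_0 = x + (I - P) y with x, y rational and
   P x = x.  Then a_k - x = P^k y - P^(k+1) y; as P is stochastic, P^k y is
   bounded, so the Cesaro means of these increments tend both to 0 and to
   delta - x. *)

From HB Require Import structures.
From mathcomp Require Import all_boot all_order all_algebra.
From mathcomp Require Import all_classical all_reals all_analysis.
From mathcomp Require Import zify ring.
Import Order.TTheory GRing.Theory Num.Theory numFieldNormedType.Exports.

Definition tri n := (n * n.+1)./2.

Lemma tri_double n : (tri n).*2 = n * n.+1.
Proof. by rewrite /tri halfK oddM oddS andbN subn0. Qed.

Section Valuation.
Variable q : nat.
Hypothesis hq : 1 < q.
Let q_gt0 : 0 < q := ltnW hq.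

Let mulnS_pred m : q * m.+1 = (q * m + q.-1).+1.
Proof. by rewrite -addnS prednK // mulnS addnC. Qed.

Lemma vq_spec n : 0 < n ->
  q ^ vq q n %| n /\ forall k, q ^ k %| n -> k <= vq q n.
Proof.
move=> n_gt0; rewrite /vq gtn_eqF //.
pose P (k : 'I_n.+1) := q ^ k %| n.
split.
  have P0 : P ord0 by rewrite /P expn0 dvd1n.
  by rewrite (bigop.bigmax_eq_arg ord0 P0); case: arg_maxnP.
move=> k qk_n; have k_lt : k < n.+1.
  by rewrite ltnS (leq_trans (ltnW (ltn_expl k hq))) // dvdn_leq.
exact: (@leq_bigmax_cond _ P (fun k : 'I_n.+1 => k : nat) (Ordinal k_lt)).
Qed.

Lemma vq_ndvd n : ~~ (q %| n) -> vq q n = 0.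
Proof.
case: n => [|n] q_n; first by [].
have [qv_n _] := vq_spec _ (ltn0Sn n).
case: (vq q n.+1) qv_n => [//|k] qv_n.
by rewrite (dvdn_trans _ qv_n) ?expnS ?dvdn_mulr in q_n.
Qed.

Lemma vq_mulq n : 0 < n -> vq q (q * n) = (vq q n).+1.
Proof.
move=> n_gt0; have qn_gt0 : 0 < q * n by rewrite muln_gt0 n_gt0 q_gt0.
have [qv_n max_n] := vq_spec _ n_gt0; have [qv_qn max_qn] := vq_spec _ qn_gt0.
apply/eqP; rewrite eqn_leq max_qn ?expnS ?dvdn_pmul2l // andbT.
case: (vq q (q * n)) qv_qn => [//|k].
by rewrite expnS dvdn_pmul2l // => /max_n.
Qed.

Lemma wqS n : wq q n.+1 = wq q n + vq q n.+1.
Proof. by rewrite /wq big_ord_recr. Qed.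

Lemma uqS n : uq q n.+1 = uq q n + wq q n.+1.
Proof. by rewrite /uq big_ord_recr. Qed.

Lemma wq_mulq_add m l : l < q -> wq q (q * m + l) = wq q (q * m).
Proof.
elim: l => [|l IHl] l_lt; first by rewrite addn0.
rewrite addnS wqS IHl ?(ltnW l_lt) // vq_ndvd ?addn0 //.
by rewrite -addnS dvdn_addr ?dvdn_mulr // gtnNdvd.
Qed.

Lemma wq_mulqS m : wq q (q * m.+1) = wq q (q * m) + (vq q m.+1).+1.
Proof.
by rewrite mulnS_pred wqS wq_mulq_add ?ltn_predL // -mulnS_pred vq_mulq // addnS.
Qed.

Lemma wq_mulq m : wq q (q * m) = m + wq q m.
Proof.
elim: m => [|m IHm]; first by rewrite muln0.
by rewrite wq_mulqS IHm wqS; lia.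
Qed.

Lemma uq_mulq_add m l : l < q -> uq q (q * m + l) = uq q (q * m) + l * (m + wq q m).
Proof.
elim: l => [|l IHl] l_lt; first by rewrite !addn0.
rewrite addnS uqS IHl ?(ltnW l_lt) // -addnS wq_mulq_add // wq_mulq; lia.
Qed.

Lemma uq_mulq m : uq q (q * m) + q.-1 * (m + wq q m) = q * (uq q m + tri m).
Proof.
elim: m => [|m IHm].
  by rewrite muln0 /uq /wq !big_ord1 /vq eqxx !muln0.
rewrite mulnS_pred uqS uq_mulq_add ?ltn_predL // -mulnS_pred wq_mulq.
have := tri_double m; have := tri_double m.+1; rewrite uqS wqS; nia.
Qed.

Lemma tri_mulq_add m l :
  tri (q * m + l) + tri q.-1 * m = q * q * tri m + l * q * m + tri l.
Proof.
apply: double_inj; rewrite !doubleD !doubleMl !tri_double.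
have := tri_double m; nia.
Qed.

End Valuation.

Lemma big_ord_mull (R : Type) (idx : R) (op : Monoid.law idx) q N (F : nat -> R) :
  \big[op/idx]_(n < q * N) F n = \big[op/idx]_(m < N) \big[op/idx]_(l < q) F (q * m + l).
Proof.
rewrite -(big_mkord xpredT) mulnC big_nat_mul big_mkord; apply: eq_bigr => m _.
rewrite -{1}(add0n (m * q)) big_addn mulSn addnK big_mkord.
by apply: eq_bigr => l _; rewrite addnC mulnC.
Qed.

Local Open Scope ring_scope.
Local Open Scope classical_set_scope.

Lemma sum_ord5 (V : nmodType) (F : 'I_5 -> V) :
  \sum_(i < 5) F i = F 0 + F 1 + F 2 + F 3 + F 4.
Proof.
rewrite !big_ord_recl big_ord0 addr0 !addrA.
by congr (_ + _ + _ + _ + _); apply: congr1; apply: val_inj.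
Qed.

Lemma cond_mulq_add q d s m l : (1 < q)%N -> (l < q)%N ->
  cond q d (s *m Mlam d q l) m = cond q d s (q * m + l).
Proof.
move=> hq lq; have q_gt0 : (0 < q)%N := ltnW hq.
have tri_pred : ((q * (q - 1))./2 = tri q.-1)%N by rewrite /tri subn1 prednK // mulnC.
have Hu : (uq q (q * m + l))%:R = (q * (uq q m + tri m))%:R - (q.-1 * (m + wq q m))%:R
    + (l * (m + wq q m))%:R :> 'Z_d.
  by rewrite uq_mulq_add // -uq_mulq // !natrD addrK.
have Hw : (wq q (q * m + l))%:R = (m + wq q m)%:R :> 'Z_d by rewrite wq_mulq_add // wq_mulq.
have Ht : (tri (q * m + l))%:R
    = (q * q * tri m + l * q * m + tri l)%:R - (tri q.-1 * m)%:R :> 'Z_d.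
  by rewrite -tri_mulq_add // natrD addrK.
have Hq : (q.-1)%:R = q%:R - 1 :> 'Z_d by rewrite -{2}(prednK q_gt0) -natr1 addrK.
rewrite /cond !mxE !sum_ord5 !mxE /= -!/(tri _) tri_pred Hu Hw Ht.
rewrite !natrD !natrM !natrD Hq.
congr (_ == 0); ring.
Qed.

Lemma gamma_sum A q d s : gamma A q d s = (\sum_(n < A) cond q d s n)%N.
Proof.
rewrite /gamma -sum1_card big_mkcond /=; apply: eq_bigr => n _.
by rewrite inE; case: cond.
Qed.

Lemma gamma_mulq q d s N : (1 < q)%N ->
  gamma (q * N) q d s = (\sum_(l < q) gamma N q d (s *m Mlam d q l))%N.
Proof.
move=> hq.
rewrite gamma_sum (@big_ord_mull _ _ _ q N (fun n => nat_of_bool (cond q d s n))).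
rewrite exchange_big; apply: eq_bigr => l _.
by rewrite gamma_sum; apply: eq_bigr => m _; rewrite cond_mulq_add.
Qed.

Lemma sum_mu_mul (R : pzSemiRingType) q d s (g : 'rV['Z_d]_5 -> R) :
  \sum_t (mu q d s t)%:R * g t = \sum_(l < q) g (s *m Mlam d q l).
Proof.
have muE t : mu q d s t = (\sum_(l < q) (t == s *m Mlam d q l))%N.
  rewrite /mu -sum1_card big_mkcond /=; apply: eq_bigr => l _.
  by rewrite inE; case: eqP.
under eq_bigr do rewrite muE natr_sum mulr_suml.
rewrite exchange_big; apply: eq_bigr => l _.
rewrite (bigD1 (s *m Mlam d q l)) //= eqxx mul1r big1 ?addr0 // => t /negbTE ->.
by rewrite mul0r.
Qed.

Lemma Pqd_ge0 (R : realType) q d s t : 0 <= Pqd q d s t :> R.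
Proof. by rewrite divr_ge0. Qed.

Lemma sum_Pqd (R : realType) q d s : (0 < q)%N -> \sum_t Pqd q d s t = 1 :> R.
Proof.
move=> q_gt0; rewrite /Pqd -mulr_suml.
under eq_bigr do rewrite -[_%:R]mulr1.
by rewrite sum_mu_mul sumr_const card_ord divff // pnatr_eq0 -lt0n.
Qed.

Lemma gamma_ratio_mulq (R : realType) q d s N : (1 < q)%N ->
  (gamma (q * N) q d s)%:R / (q * N)%:R
    = \sum_t Pqd q d s t * ((gamma N q d t)%:R / N%:R) :> R.
Proof.
move=> hq; rewrite gamma_mulq // natr_sum.
rewrite -(sum_mu_mul _ q d s (fun t => (gamma N q d t)%:R)).
rewrite natrM invfM mulr_suml.
by apply: eq_bigr => t _; rewrite /Pqd mulrACA.
Qed.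

Lemma cvg_expnl q : (1 < q)%N -> expn q @ \oo --> \oo.
Proof.
move=> hq P [n _ Pn]; exists n => // k /= le_nk; apply: Pn.
exact: leq_trans le_nk (ltnW (ltn_expl k hq)).
Qed.

Lemma cvg_sumr {R : numFieldType} {I : Type} (r : seq I) {u : I -> nat -> R} {l : I -> R} :
  (forall i, u i n @[n --> \oo] --> l i) ->
  \sum_(i <- r) u i n @[n --> \oo] --> \sum_(i <- r) l i.
Proof. by move=> ul; apply: cvg_big => //; exact: add_continuous. Qed.

Lemma bounded_increments_cvg0 (R : archiRealFieldType) (h : R ^nat) (c L : R) :
  (forall k, `|h k| <= c) -> h k - h k.+1 @[k --> \oo] --> L -> L = 0.
Proof.
move=> h_bd hL.
have meanE n : arithmetic_mean (fun k => h k - h k.+1) n = (h 0%N - h n.+1) * harmonic n.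
  rewrite /arithmetic_mean seriesEnat /= (@telescope_sumr_eq _ _ _ (fun k => - h k)) //.
    by rewrite opprK addrC mulrC.
  by move=> k _; rewrite opprK addrC.
have bd n : `|h 0%N - h n.+1| <= c *+ 2 by rewrite (le_trans (ler_normB _ _)) ?mulr2n ?lerD.
suff mean0 : arithmetic_mean (fun k => h k - h k.+1) @ \oo --> (0 : R).
  exact: cvg_unique (cesaro hL) mean0.
rewrite (funext meanE).
apply: (@squeeze_cvgr _ _ _ _ (fun n => - (c *+ 2 * harmonic n))
  (fun n => c *+ 2 * harmonic n)).
- near=> n; rewrite -ler_norml normrM (ger0_norm (harmonic_ge0 _)).
  by rewrite ler_pM2r ?bd ?harmonic_gt0.
- rewrite -oppr0 -(mulr0 (c *+ 2)); apply: cvgN.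
  by apply: cvgM; [exact: cvg_cst | exact: cvg_harmonic].
- by rewrite -(mulr0 (c *+ 2)); apply: cvgM; [exact: cvg_cst | exact: cvg_harmonic].
Unshelve. all: by end_near.
Qed.

Lemma map_kernel_image_decomposition {F K : fieldType} {f : {rmorphism F -> K}}
    {n} {B : 'M[F]_n} {v : 'rV[F]_n} {l : 'rV[K]_n} :
  l *m map_mx f B = 0 -> (map_mx f v - l <= map_mx f B)%MS ->
  exists x y : 'rV[F]_n, v = x + y *m B /\ x *m B = 0.
Proof.
move=> lB /submxP[z vl_zB].
have : (row_mx v 0 <= block_mx 1%:M B B 0)%MS.
  rewrite -(map_submx f) map_row_mx map_block_mx !map_mx0 map_mx1.
  apply/submxP; exists (row_mx l z).
  by rewrite mul_row_block mulmx1 mulmx0 addr0 -vl_zB lB addrC subrK.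
case/submxP=> xy; rewrite -(hsubmxK xy) mul_row_block mulmx1 mulmx0 addr0.
by case/eq_row_mx=> v_xy xB; exists (lsubmx xy), (rsubmx xy).
Qed.

Definition nonexpansive_mx {R : numDomainType} {n} (Q : 'M[R]_n) :=
  forall (v : 'rV[R]_n) c, (forall i, `|v 0 i| <= c) -> forall j, `|(v *m Q) 0 j| <= c.

Lemma col_stochastic_nonexpansive_mx (R : realDomainType) n (Q : 'M[R]_n) :
  (forall i j, 0 <= Q i j) -> (forall j, \sum_i Q i j = 1) -> nonexpansive_mx Q.
Proof.
move=> Q_ge0 Q_sum v c v_le j; rewrite mxE (le_trans (ler_norm_sum _ _ _)) //.
rewrite -[c]mulr1 -(Q_sum j) mulr_sumr ler_sum // => i _.
by rewrite normrM (ger0_norm (Q_ge0 i j)); apply: ler_wpM2r.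
Qed.

Lemma submx_cvg {R : numFieldType} {m n} (B : 'M[R]_(m, n)) (w : nat -> 'rV[R]_n)
    (w_lim : 'rV[R]_n) :
  (forall k, (w k <= B)%MS) -> (forall j, w k 0 j @[k --> \oo] --> w_lim 0 j) ->
  (w_lim <= B)%MS.
Proof.
move=> wB w_cvg; rewrite submxE; apply/eqP/matrixP => i j; rewrite (ord1 i) !mxE.
have wB0 k : \sum_l w k 0 l * cokermx B l j = 0.
  by have := wB k; rewrite submxE => /eqP/matrixP/(_ 0 j); rewrite !mxE.
have : \sum_l w k 0 l * cokermx B l j @[k --> \oo] --> \sum_l w_lim 0 l * cokermx B l j.
  by apply: cvg_sumr => l; apply: cvgM; [exact: w_cvg | exact: cvg_cst].
rewrite (funext wB0) => lim0; exact: cvg_unique _ lim0 (cvg_cst _).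
Qed.

Section IterateLimit.
Context {R : archiRealFieldType} {n : nat}.
Context {Q : 'M[R]_n} {u : nat -> 'rV[R]_n} {l : 'rV[R]_n}.
Hypothesis uS : forall k, u k.+1 = u k *m Q.
Hypothesis u_cvg : forall j, u k 0 j @[k --> \oo] --> l 0 j.

Lemma iterate_limit_fixed : l *m Q = l.
Proof.
apply/matrixP => i j; rewrite (ord1 i) {i}.
have uS_cvg : u k.+1 0 j @[k --> \oo] --> l 0 j by rewrite (cvg_shiftS (fun k => u k 0 j)).
suff uS_cvgQ : u k.+1 0 j @[k --> \oo] --> (l *m Q) 0 j.
  exact: cvg_unique _ uS_cvgQ uS_cvg.
under eq_cvg do rewrite uS mxE.
by rewrite mxE; apply: cvg_sumr => i; apply: cvgM; [exact: u_cvg | exact: cvg_cst].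
Qed.

Lemma iterate_limit_image : (u 0%N - l <= 1%:M - Q)%MS.
Proof.
have u_sum k : u 0%N - u k = (\sum_(i < k) u i) *m (1%:M - Q).
  elim: k => [|k IHk]; first by rewrite big_ord0 mul0mx subrr.
  by rewrite big_ord_recr mulmxDl -IHk uS mulmxBr mulmx1 addrA subrK.
apply: (@submx_cvg _ _ _ (1%:M - Q) (fun k => u 0%N - u k)) => [k|j].
  by rewrite u_sum submxMl.
rewrite !mxE; under eq_cvg do rewrite !mxE.
exact: cvgB (cvg_cst _) (u_cvg j).
Qed.

Hypothesis Q_nonexpansive : nonexpansive_mx Q.

Lemma iterate_limit_fixed_part x y :
  x *m Q = x -> u 0%N = x + y *m (1%:M - Q) -> l = x.
Proof.
move=> xQ u0; pose h k := iter k (mulmxr Q) y.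
have u_h k : u k = x + (h k - h k.+1).
  elim: k => [|k IHk]; first by rewrite u0 mulmxBr mulmx1.
  by rewrite uS IHk mulmxDl xQ mulmxBl.
have h_bd k i : `|h k 0 i| <= \sum_j `|y 0 j|.
  elim: k i => [|k IHk] i; last exact: Q_nonexpansive.
  by rewrite (bigD1 i) //= lerDl sumr_ge0.
apply/matrixP => i j; rewrite (ord1 i) {i}; apply/eqP; rewrite -subr_eq0; apply/eqP.
apply: (@bounded_increments_cvg0 _ (fun k => h k 0 j) _ _ (h_bd^~ j)).
have h_incr k : h k 0 j - h k.+1 0 j = u k 0 j - x 0 j.
  by rewrite u_h [in RHS]mxE [x 0 j + _]addrC addrK [in RHS]mxE [in RHS]mxE.
under eq_cvg do rewrite h_incr.
exact: cvgB (u_cvg j) (cvg_cst _).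
Qed.

End IterateLimit.

Lemma iterate_limit_rat {R : archiRealFieldType} {n} (Qr : 'M[rat]_n) (ur : 'rV[rat]_n)
    (u : nat -> 'rV[R]_n) (l : 'rV[R]_n) :
  nonexpansive_mx (map_mx (@ratr R) Qr) -> u 0%N = map_mx ratr ur ->
  (forall k, u k.+1 = u k *m map_mx ratr Qr) ->
  (forall j, u k 0 j @[k --> \oo] --> l 0 j) ->
  exists lr, l = map_mx ratr lr.
Proof.
move=> Q_nonexp u0 uS u_cvg.
have B_map : map_mx (@ratr R) (1%:M - Qr) = 1%:M - map_mx ratr Qr.
  by rewrite map_mxB map_mx1.
have lB : l *m map_mx ratr (1%:M - Qr) = 0.
  by rewrite B_map mulmxBr mulmx1 (iterate_limit_fixed uS u_cvg) subrr.
have ur_l : (map_mx ratr ur - l <= map_mx ratr (1%:M - Qr))%MS.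
  by rewrite -u0 B_map; exact: iterate_limit_image uS u_cvg.
have [x [y [ur_xy xB]]] := map_kernel_image_decomposition lB ur_l.
exists x; apply: (iterate_limit_fixed_part uS u_cvg Q_nonexp _ (map_mx ratr y)).
  have := congr1 (map_mx (@ratr R)) xB.
  by rewrite map_mxM B_map map_mx0 mulmxBr mulmx1 => /subr0_eq/esym.
by rewrite u0 ur_xy map_mxD map_mxM B_map.
Qed.

Definition rV_of_fun {T : finType} {R : Type} (f : T -> R) : 'rV[R]_#|{: T}| :=
  \row_i f (enum_val i).

Lemma rV_of_funE {T : finType} {R : Type} (f : T -> R) j : rV_of_fun f 0 j = f (enum_val j).
Proof. by rewrite mxE. Qed.

Section Density.
Context {R : realType} {q d : nat}.
Hypothesis hq : (1 < q)%N.
Context {delta : 'rV['Z_d]_5 -> R}.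
Hypothesis hdelta : forall s,
  (gamma N q d s)%:R / (N%:R : R) @[N --> \oo] --> delta s.

Let q_gt0 : (0 < q)%N := ltnW hq.

Lemma density_Pqd_fixed s : \sum_t Pqd q d s t * delta t = delta s.
Proof.
have := cvg_comp _ _ (cvg_mulnl _ q_gt0) (hdelta s).
under eq_cvg do rewrite /= gamma_ratio_mulq //; move=> lim_mulq.
have lim_sum : \sum_t Pqd q d s t * ((gamma N q d t)%:R / N%:R) @[N --> \oo]
    --> \sum_t Pqd q d s t * delta t.
  by apply: cvg_sumr => t; apply: cvgM; [exact: cvg_cst | exact: hdelta].
exact: cvg_unique _ lim_sum lim_mulq.
Qed.

Lemma density_rat s : exists r : rat, delta s = ratr r.
Proof.
pose n := #|{: 'rV['Z_d]_5}|.
(* Row vectors act on the left, so [Qr] represents the transpose of P(q,d). *)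
pose Qr : 'M[rat]_n := \matrix_(i, j) ((mu q d (enum_val j) (enum_val i))%:R / q%:R).
have Q_map : map_mx (@ratr R) Qr = \matrix_(i, j) Pqd q d (enum_val j) (enum_val i).
  by apply/matrixP => i j; rewrite !mxE fmorph_div !rmorph_nat.
have rV_of_fun_mulQ f :
    rV_of_fun f *m map_mx (@ratr R) Qr = rV_of_fun (fun s => \sum_t Pqd q d s t * f t).
  apply/matrixP => i j; rewrite Q_map !mxE [RHS](big_enum_val (A := predT)) /=.
  by apply: eq_bigr => k _; rewrite !mxE mulrC.
pose ratio k s := (gamma (q ^ k) q d s)%:R / (q ^ k)%:R : R.
have ratio_cvg t : ratio k t @[k --> \oo] --> delta t.
  exact: cvg_comp _ _ (cvg_expnl _ hq) (hdelta t).
have Q_nonexp : nonexpansive_mx (map_mx (@ratr R) Qr).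
  apply: col_stochastic_nonexpansive_mx => [i j|j]; rewrite Q_map.
    by rewrite mxE Pqd_ge0.
  under eq_bigr do rewrite mxE.
  by rewrite -(big_enum_val (A := predT) (fun t => Pqd q d (enum_val j) t)) sum_Pqd.
have [lr delta_lr] : exists lr, rV_of_fun delta = map_mx ratr lr.
  apply: (iterate_limit_rat Qr (\row_i (gamma 1 q d (enum_val i))%:R)
    (fun k => rV_of_fun (ratio k)) _ Q_nonexp).
  - by apply/matrixP => i j; rewrite !mxE /ratio expn0 divr1 rmorph_nat.
  - move=> k; rewrite rV_of_fun_mulQ; congr rV_of_fun; apply: funext => t.
    by rewrite /ratio expnS gamma_ratio_mulq.
  - move=> j; rewrite rV_of_funE; under eq_cvg do rewrite rV_of_funE.
    exact: ratio_cvg.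
exists (lr 0 (enum_rank s)).
by move/matrixP/(_ 0 (enum_rank s)): delta_lr; rewrite rV_of_funE mxE enum_rankK.
Qed.

End Density.

Theorem theorem2p6 (R : realType) (q d : nat) (hq : (1 < q)%N) (hd : (1 < d)%N)
  (delta : 'rV['Z_d]_5 -> R)
  (hdelta : forall s : 'rV['Z_d]_5,
     ((gamma N q d s)%:R / (N%:R : R)) @[N --> \oo] --> delta s) :
  (forall s : 'rV['Z_d]_5, \sum_(t : 'rV['Z_d]_5) Pqd q d s t * delta t = delta s)
  /\ (forall s : 'rV['Z_d]_5, exists r : rat, delta s = ratr r).
Proof.
split; [exact: (density_Pqd_fixed hq hdelta) | exact: (density_rat hq hdelta)].
Qed.
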